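(* Let $S$ be the set of positive integers $\ell$ for which there exists $n_0$ with $\Delta_\ell(n)>0$ for all $n\geq n_0$, and for each $\ell\in S$ let $n_0(\ell)$ be an integer such that $\Delta_\ell(n)>0$ for all $n\ge n_0(\ell)$. If $S$ is infinite, then the sequence $(n_0(\ell))_{\ell\in S}$ is unbounded.
   Context: For integers $n\geq 0$ let $S_n$ be the symmetric group on $n$ elements ($S_0$ trivial). For an integer $\ell\geq 1$ let $C_{\ell,n}=\{(\pi_1,\dots,\pi_\ell)\in S_n^\ell : \pi_j\pi_k=\pi_k\pi_j \text{ for all } 1\le j,k\le \ell\}$ and $N_\ell(n)=|C_{\ell,n}|/|S_n|$ (so $N_\ell(0)=1$). Define $\Delta_\ell(n)=N_\ell(n)^2-N_\ell(n-1)N_\ell(n+1)$ for $n\geq 1$. *)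

From HB Require Import structures.
From mathcomp Require Import all_boot all_order all_algebra all_fingroup.
Set Implicit Arguments. Unset Strict Implicit. Unset Printing Implicit Defensive.
Import GRing.Theory Num.Theory.
Local Open Scope ring_scope.

Definition commuting_tuples (l n : nat) : {set {ffun 'I_l -> {perm 'I_n}}} :=
  [set f : {ffun 'I_l -> {perm 'I_n}} |
     [forall j : 'I_l, forall k : 'I_l, ((f j * f k)%g == (f k * f j)%g)]].

Definition Ncomm (l n : nat) : rat :=
  (#|commuting_tuples l n|)%:R / (#|{perm 'I_n}|)%:R.

(* Delta_l(n) = N_l(n)^2 - N_l(n-1) N_l(n+1), meaningful for n >= 1. *)
Definition Delta (l n : nat) : rat :=
  Ncomm l n ^+ 2 - Ncomm l n.-1 * Ncomm l n.+1.

Definition inS (l : nat) : Prop :=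
  (0 < l)%N /\ exists n0 : nat, forall n : nat, (1 <= n)%N -> (n0 <= n)%N -> 0 < Delta l n.

From mathcomp Require Import all_boot all_order all_algebra all_fingroup.
From mathcomp Require Import zify ring.
Set Implicit Arguments. Unset Strict Implicit. Unset Printing Implicit Defensive.
Import Order.TTheory GRing.Theory Num.Theory.

(* A commuting l-tuple of permutations generates an abelian subgroup of S_n,
   and abelian subgroups of S_n have order at most a(n), with a(3j+4) = 4 3^j;
   so |C_{l,n}| <= c_n a(n)^l.  Conversely, direct sums of cyclic rotations
   give |C_{l,3k}| >= 3^(kl) and |C_{l,3k+2}| >= 2^l 3^(kl).  At n = 3j+4 this
   bounds N_l(n)^2 by c 16^l 9^(jl) and N_l(n-1) N_l(n+1) from below by
   c' 18^l 9^(jl), so Delta_l(3j+4) <= 0 for all large l: every large enough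
   l in S has n_0(l) > 3j+4. *)

(* The largest order of an abelian subgroup of S_n; only the upper bound
   [card_abelian_Sym] is needed. *)
Fixpoint abelian_bound (n : nat) : nat :=
  match n with
  | 0 | 1 => 1 | 2 => 2 | 3 => 3 | 4 => 4
  | k.+3 => 3 * abelian_bound k
  end.

Lemma abelian_bound_sub3 n : 5 <= n -> abelian_bound n = 3 * abelian_bound (n - 3).
Proof. by case: n => [|[|[|[|[|[|n]]]]]] //; rewrite subSS subSS subSS. Qed.

Lemma leq_abelian_bound n : n <= abelian_bound n.
Proof.
elim/ltn_ind: n => n IH; have [lt_n5 | ge_n5] := ltnP n 5.
  by case: n lt_n5 {IH} => [|[|[|[|[|]]]]].
have /IH ih : n - 3 < n by lia.
rewrite abelian_bound_sub3 //; lia.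
Qed.

Lemma abelian_bound_mul a b :
  abelian_bound a * abelian_bound b <= abelian_bound (a + b).
Proof.
have [n] := ubnP (a + b); elim: n a b => [//|n IH] a b lt_abn.
wlog le_ba : a b lt_abn / b <= a.
  move=> hw; have [le_ba | /ltnW le_ab] := leqP b a; first exact: hw.
  by rewrite mulnC addnC; apply: hw; rewrite // addnC.
have [lt_a5 | ge_a5] := ltnP a 5.
  by case: a lt_a5 le_ba {lt_abn} => [|[|[|[|[|]]]]] //; case: b => [|[|[|[|[|]]]]].
have ge_ab5 : 5 <= a + b by lia.
rewrite (abelian_bound_sub3 ge_a5) (abelian_bound_sub3 ge_ab5) -mulnA leq_mul2l /=.
by rewrite -addnBAC; [apply: IH; lia | lia].
Qed.

Lemma abelian_bound_3j4 j : abelian_bound (3 * j + 4) = 4 * 3 ^ j.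
Proof.
elim: j => [//|j IH]; rewrite abelian_bound_sub3; last by lia.
by rewrite (_ : 3 * j.+1 + 4 - 3 = 3 * j + 4) ?IH ?expnS; lia.
Qed.

Lemma card_abelian_Sym (T : finType) (S : {set T}) (A : {group {perm T}}) :
  abelian A -> A \subset Sym S -> #|A| <= abelian_bound #|S|.
Proof.
have [n] := ubnP #|S|; elim: n S A => [//|n IH] S A lt_Sn abA sAS.
have onS a : a \in A -> perm_on S a by move=> Aa; have := subsetP sAS a Aa; rewrite inE.
have [S0 | [x Sx]] := set_0Vmem S.
  suff -> : A :=: 1%g by rewrite cards1 S0 cards0.
  apply/trivgP/subsetP => a Aa; rewrite inE; apply/eqP.
  by apply: perm_on_id (onS a Aa) _; rewrite S0 cards0.
pose O := orbit 'P A x.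
have sOS : O \subset S.
  by apply/subsetP => _ /orbitP [a Aa <-]; rewrite /= perm_closed ?onS.
have Ox : x \in O := orbit_refl _ _ _.
(* An element fixing x also fixes every b x, because it commutes with b. *)
have sHS : 'C_A[x | 'P]%g \subset Sym (S :\: O).
  apply/subsetP => a /setIP [Aa /astab1P /= ax]; rewrite inE.
  apply/subsetP => y; rewrite inE => ay; rewrite inE.
  rewrite (subsetP (onS a Aa)) ?inE // andbT.
  apply: contra ay => /orbitP [b Ab <-]; rewrite /= -permM.
  by rewrite (centsP abA b Ab a Aa) permM -[a x]/(aperm x a) ax.
have cardS : #|S| = #|O| + #|S :\: O| by rewrite -(cardsID O S) (setIidPr sOS).
rewrite -(card_orbit_stab 'P A x) -/O cardS.
apply: leq_trans (abelian_bound_mul _ _); apply: leq_mul; first exact: leq_abelian_bound.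
apply: IH sHS; last exact: abelianS (subsetIl _ _) abA.
have : 0 < #|O| by apply/card_gt0P; exists x.
lia.
Qed.

Lemma card_bigcup_leq (I T : finType) (P : pred I) (F : I -> {set T}) :
  #|\bigcup_(i | P i) F i| <= \sum_(i | P i) #|F i|.
Proof.
apply: (big_ind2 (fun (A : {set T}) m => #|A| <= m)) => [|A m B k le_Am le_Bk|//].
  by rewrite cards0.
exact: leq_trans (leq_card_setU A B) (leq_add le_Am le_Bk).
Qed.

Lemma card_commuting_tuples_leq l n :
  #|commuting_tuples l n| <= #|{group {perm 'I_n}}| * abelian_bound n ^ l.
Proof.
pose tuples_in (G : {group {perm 'I_n}}) :=
  [set f : {ffun 'I_l -> {perm 'I_n}} | f \in ffun_on G].
have sub : commuting_tuples l n
           \subset \bigcup_(G : {group {perm 'I_n}} | abelian G) tuples_in G.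
  apply/subsetP => f; rewrite inE => /forallP comm_f.
  apply/bigcupP; exists <<[set f j | j : 'I_l]>>%G; last first.
    by rewrite inE; apply/ffun_onP => j; apply/mem_gen/imset_f.
  rewrite /= abelian_gen; apply/centsP => _ /imsetP [j _ ->] _ /imsetP [k _ ->].
  by have /forallP /(_ k) /eqP := comm_f j.
apply: leq_trans (subset_leq_card sub) _; apply: leq_trans (card_bigcup_leq _ _) _.
apply: leq_trans
  (_ : \sum_(G : {group {perm 'I_n}} | abelian G) abelian_bound n ^ l <= _).
  apply: leq_sum => G abG; rewrite cardsE card_ffun_on card_ord.
  have [-> // | l_gt0] := posnP l; rewrite leq_exp2r //.
  have := @card_abelian_Sym _ [set: 'I_n] G abG; rewrite cardsT card_ord; apply.
  by apply/subsetP => a _; rewrite inE; apply/subsetP => y _; rewrite inE.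
by rewrite sum_nat_const leq_mul2r max_card orbT.
Qed.

Lemma card_commuting_tuples_gt0 l n : 0 < #|commuting_tuples l n|.
Proof.
apply/card_gt0P; exists [ffun=> 1%g]; rewrite inE.
by apply/forallP => j; apply/forallP => k; rewrite !ffunE.
Qed.

Definition rot_perm m (i : 'I_m.+1) : {perm 'I_m.+1} := perm (@addIr _ i).

Lemma card_commuting_tuples_ge_exp l n : n ^ l <= #|commuting_tuples l n|.
Proof.
case: n => [|m].
  by case: l => [|l]; [exact: card_commuting_tuples_gt0 | rewrite exp0n].
pose rot_tuple (g : {ffun 'I_l -> 'I_m.+1}) := [ffun j => rot_perm (g j)].
have inj_rot : injective rot_tuple.
  move=> g1 g2 /ffunP eq_g; apply/ffunP => j.
  by have /permP /(_ 0%R) := eq_g j; rewrite !ffunE !permE !add0r.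
have : rot_tuple @: [set: {ffun 'I_l -> 'I_m.+1}] \subset commuting_tuples l m.+1.
  apply/subsetP => _ /imsetP [g _ ->]; rewrite inE.
  apply/forallP => j; apply/forallP => k; apply/eqP/permP => x.
  by rewrite !permM !ffunE !permE -!addrA [(g k + g j)%R]addrC.
by move/subset_leq_card; rewrite card_imset // cardsT card_ffun !card_ord.
Qed.

Section PermSum.

Variables a b : nat.

Definition perm_sum_fun (p : {perm 'I_a}) (q : {perm 'I_b}) (x : 'I_(a + b)) :=
  unsplit (match split x with inl y => inl (p y) | inr z => inr (q z) end).

Lemma perm_sum_fun_inj p q : injective (perm_sum_fun p q).
Proof.
move=> x1 x2 /(can_inj unsplitK) eq_x12; rewrite -[x1]splitK -[x2]splitK.
by move: eq_x12; case: (split x1) (split x2) => [y1|z1] [y2|z2] //= [] /perm_inj ->.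
Qed.

Definition perm_sum p q : {perm 'I_(a + b)} := perm (@perm_sum_fun_inj p q).

Lemma perm_sum_lshift p q y : perm_sum p q (lshift b y) = lshift b (p y).
Proof. by rewrite permE /perm_sum_fun (unsplitK (inl y)). Qed.

Lemma perm_sum_rshift p q z : perm_sum p q (rshift a z) = rshift a (q z).
Proof. by rewrite permE /perm_sum_fun (unsplitK (inr z)). Qed.

Lemma perm_sumM p q p' q' :
  (perm_sum p q * perm_sum p' q')%g = perm_sum (p * p')%g (q * q')%g.
Proof.
apply/permP => x; rewrite -[x]splitK permM.
by case: (split x) => y; rewrite /= ?perm_sum_lshift ?perm_sum_rshift !permM.
Qed.

Lemma perm_sum_inj p q p' q' : perm_sum p q = perm_sum p' q' -> p = p' /\ q = q'.
Proof.
move=> eq_pq; split; apply/permP => y.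
  by apply: (@lshift_inj a b); rewrite -(perm_sum_lshift p q) eq_pq perm_sum_lshift.
by apply: (@rshift_inj a b); rewrite -(perm_sum_rshift p q) eq_pq perm_sum_rshift.
Qed.

End PermSum.

Lemma card_commuting_tuples_mul l a b :
  #|commuting_tuples l a| * #|commuting_tuples l b| <= #|commuting_tuples l (a + b)|.
Proof.
pose sum_tuple (fg : {ffun 'I_l -> {perm 'I_a}} * {ffun 'I_l -> {perm 'I_b}}) :=
  [ffun j => perm_sum (fg.1 j) (fg.2 j)].
have inj_sum : injective sum_tuple.
  move=> [f1 g1] [f2 g2] /ffunP eq_fg.
  have eq_j j : f1 j = f2 j /\ g1 j = g2 j.
    by apply: perm_sum_inj; have := eq_fg j; rewrite !ffunE.
  by congr pair; apply/ffunP => j; case: (eq_j j).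
have : sum_tuple @: setX (commuting_tuples l a) (commuting_tuples l b)
       \subset commuting_tuples l (a + b).
  apply/subsetP => _ /imsetP [[f g] /setXP [] /[!inE] /forallP comm_f /forallP comm_g ->].
  apply/forallP => j; apply/forallP => k; rewrite !ffunE !perm_sumM.
  by have /forallP /(_ k) /eqP -> := comm_f j; have /forallP /(_ k) /eqP -> := comm_g j.
by move/subset_leq_card; rewrite card_imset // cardsX.
Qed.

Lemma card_commuting_tuples_3k l k : 3 ^ (k * l) <= #|commuting_tuples l (3 * k)|.
Proof.
elim: k => [|k IH]; first exact: card_commuting_tuples_gt0.
rewrite mulnS mulSn expnD; apply: leq_trans (card_commuting_tuples_mul _ _ _).
exact: leq_mul (card_commuting_tuples_ge_exp l 3) IH.
Qed.

Lemma card_commuting_tuples_3k2 l k :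
  2 ^ l * 3 ^ (k * l) <= #|commuting_tuples l (3 * k + 2)|.
Proof.
rewrite mulnC; apply: leq_trans (card_commuting_tuples_mul _ _ _).
exact: leq_mul (card_commuting_tuples_3k l k) (card_commuting_tuples_ge_exp l 2).
Qed.

Lemma leq_mul_exp16_exp18 c l : 8 * c <= l -> c * 16 ^ l <= 18 ^ l.
Proof.
(* Bernoulli's inequality for 18/16 = 1 + 1/8. *)
have bernoulli : (l + 8) * 16 ^ l <= 8 * 18 ^ l.
  elim: l => // l IH; rewrite !expnS.
  have : 16 * ((l + 8) * 16 ^ l) <= 18 * (8 * 18 ^ l) by rewrite leq_mul.
  nia.
move=> le_cl; rewrite -(leq_pmul2l (_ : 0 < 8)) // mulnA.
by apply: leq_trans bernoulli; rewrite leq_mul2r (leq_trans le_cl (leq_addr _ _)) orbT.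
Qed.

Local Open Scope ring_scope.

Lemma Delta_le0 l n :
  (#|commuting_tuples l n| ^ 2 * n.-1`! * n.+1`!
     <= #|commuting_tuples l n.-1| * #|commuting_tuples l n.+1| * n`! ^ 2)%N ->
  Delta l n <= 0.
Proof.
rewrite /Delta /Ncomm !card_Sn subr_le0 expr_div_n mulf_div => le_nat.
rewrite ler_pdivrMr ?exprn_gt0 ?ltr0n ?fact_gt0 // mulrAC.
rewrite ler_pdivlMr ?mulr_gt0 ?ltr0n ?fact_gt0 //.
by rewrite mulrA -!natrX -!natrM ler_nat.
Qed.

Lemma Delta_3j4_le0 j l :
  (8 * (#|{group {perm 'I_(3 * j + 4)}}| ^ 2 * (3 * j + 3)`! * (3 * j + 5)`!) <= l)%N ->
  Delta l (3 * j + 4) <= 0.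
Proof.
set K := #|{group {perm 'I_(3 * j + 4)}}|; set c := (K ^ 2 * _ * _)%N.
move=> /leq_mul_exp16_exp18 le_c18; apply: Delta_le0.
have -> : (3 * j + 4).-1 = (3 * j + 3)%N by lia.
have -> : (3 * j + 4).+1 = (3 * j + 5)%N by lia.
set X := (3 ^ (j * l))%N.
have le_a : (#|commuting_tuples l (3 * j + 4)| <= K * 4 ^ l * X)%N.
  rewrite -mulnA /X expnM -expnMn -abelian_bound_3j4.
  exact: card_commuting_tuples_leq.
have ge_b : (3 ^ l * X <= #|commuting_tuples l (3 * j + 3)|)%N.
  rewrite /X -expnD -mulSn (_ : 3 * j + 3 = 3 * j.+1)%N; last by lia.
  exact: card_commuting_tuples_3k.
have ge_d : (2 ^ l * (3 ^ l * X) <= #|commuting_tuples l (3 * j + 5)|)%N.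
  rewrite /X -expnD -mulSn (_ : 3 * j + 5 = 3 * j.+1 + 2)%N; last by lia.
  exact: card_commuting_tuples_3k2.
apply: (@leq_trans ((K * 4 ^ l * X) ^ 2 * (3 * j + 3)`! * (3 * j + 5)`!)).
  by rewrite !leq_mul2r leq_sqr le_a !orbT.
apply: (@leq_trans (3 ^ l * X * (2 ^ l * (3 ^ l * X)))); last first.
  apply: leq_trans (leq_mul ge_b ge_d) _.
  by apply: leq_pmulr; rewrite expn_gt0 fact_gt0.
have -> : ((K * 4 ^ l * X) ^ 2 * (3 * j + 3)`! * (3 * j + 5)`!
           = c * (4 ^ l * 4 ^ l) * X ^ 2)%N by rewrite /c; ring.
have -> : (3 ^ l * X * (2 ^ l * (3 ^ l * X)) = 2 ^ l * 3 ^ l * 3 ^ l * X ^ 2)%N by ring.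
by rewrite -!expnMn leq_mul2r le_c18 orbT.
Qed.

Theorem corollary1p6 (n0 : nat -> nat) :
  (forall l : nat, inS l ->
     forall n : nat, (1 <= n)%N -> (n0 l <= n)%N -> 0 < Delta l n) ->
  (forall m : nat, exists l : nat, (m <= l)%N /\ inS l) ->
  forall B : nat, exists l : nat, inS l /\ (B < n0 l)%N.
Proof.
move=> Delta_gt0 S_unbounded B.
have [l [le_Ll Sl]] := S_unbounded
  (8 * (#|{group {perm 'I_(3 * B + 4)}}| ^ 2 * (3 * B + 3)`! * (3 * B + 5)`!))%N.
exists l; split => //; rewrite ltnNge; apply/negP => le_n0B.
suff : 0 < Delta l (3 * B + 4) by rewrite ltNge (Delta_3j4_le0 le_Ll).
by apply: Delta_gt0 => //; lia.
Qed.
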